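(* Let $A$ be a commutative Noetherian regular ring of prime characteristic $p$, let $e\geq 1$, and let $y_1,\ldots,y_n$ be an $A$-Koszul regular sequence, $I_n=\langle y_1,\ldots,y_n\rangle$. Then the Frobenius–Koszul complex $\mathcal{FK}_\bullet(y_1,\ldots,y_n;A)$ is a finite free resolution of $A/I_n$ in the category of left $A[\Theta;F^e]$-modules.
   Context: $F:A\to A$ is the Frobenius map $a\mapsto a^p$ and $F^e$ its $e$-th iterate. The left skew polynomial ring $A[\Theta;F^e]$ is the ring which is a free left $A$-module with basis $\{\Theta^i\}_{i\geq0}$ and multiplication determined by $\Theta a=a^{p^e}\Theta$. A sequence $y_1,\dots,y_n$ in $A$ is Koszul regular if the Koszul complex $K_\bullet(y_1,\ldots,y_n;A)$ has homology only in degree $0$. For $J=\{j_1<\cdots<j_k\}\subseteq\{1,\dots,n\}$ put $\mathbf{e}_J=\mathbf{e}_{j_1}\wedge\cdots\wedge\mathbf{e}_{j_k}$ and $y_J^{p^e-1}=y_{j_1}^{p^e-1}\cdots y_{j_k}^{p^e-1}$ (equal to $1$ if $J=\emptyset$). The Frobenius–Koszul complex $\mathcal{FK}_\bullet(y_1,\ldots,y_n;A)$ has, for $0\le l\le n+1$, $\mathcal{FK}_l$ the free left $A[\Theta;F^e]$-module with basis $\{\mathbf{e}_I:|I|=l\}\cup\{\mathbf{e}_J\wedge u:|J|=l-1\}$, and left $A[\Theta;F^e]$-linear differentials $\partial_l(\mathbf{e}_I)=\sum_{r=1}^l(-1)^{r-1}y_{i_r}\mathbf{e}_{I\setminus\{i_r\}}$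 for $I=\{i_1<\dots<i_l\}$ and $\partial_l(\mathbf{e}_J\wedge u)=(-1)^{l-1}(\Theta-y_J^{p^e-1})\mathbf{e}_J+\sum_{r=1}^{l-1}(-1)^{r-1}y_{j_r}^{p^e}\mathbf{e}_{J\setminus\{j_r\}}\wedge u$ for $J=\{j_1<\dots<j_{l-1}\}$. $A/I_n$ is a left $A[\Theta;F^e]$-module with $\Theta$ acting by $\bar a\mapsto \overline{a^{p^e}}$. *)

From HB Require Import structures.
From mathcomp Require Import all_boot all_order all_algebra.
Set Implicit Arguments. Unset Strict Implicit. Unset Printing Implicit Defensive.
Import Order.TTheory GRing.Theory Num.Theory.
Local Open Scope ring_scope.

Section CommAlg.
Variable A : comNzRingType.

Definition in_gen (m : nat) (x : 'I_m -> A) (a : A) : Prop :=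
  exists c : 'I_m -> A, a = \sum_(i < m) c i * x i.

Definition is_ideal (S : A -> Prop) : Prop :=
  [/\ S 0, (forall a b, S a -> S b -> S (a + b)) & (forall r a, S a -> S (r * a))].

Definition noetherian : Prop :=
  forall S : A -> Prop, is_ideal S ->
    exists m (x : 'I_m -> A), forall a, S a <-> in_gen x a.

Definition is_prime_ideal (P : A -> Prop) : Prop :=
  [/\ is_ideal P, ~ P 1 & (forall a b, P (a * b) -> P a \/ P b)].

Definition prime_chain_to (P : A -> Prop) (h : nat) : Prop :=
  exists c : nat -> A -> Prop,
    [/\ (forall i, (i <= h)%N -> is_prime_ideal (c i)),
        (forall a, c h a <-> P a) &
        (forall i, (i < h)%N ->
           (forall a, c i a -> c i.+1 a) /\ exists a, c i.+1 a /\ ~ c i a)].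

(* the maximal ideal P A_P of the localization A_P is generated by m elements
   (written without localization: x_i/1 generate P A_P iff some s ∉ P
   satisfies s P ⊆ (x_1,...,x_m)) *)
Definition loc_gen (P : A -> Prop) (m : nat) : Prop :=
  exists x : 'I_m -> A, (forall i, P (x i)) /\
    exists s, ~ P s /\ forall a, P a -> in_gen x (s * a).

(* A is regular: for every prime P, A_P is a regular local ring, i.e.
   dim A_P (= height P) equals the minimal number of generators of P A_P *)
Definition regular_ring : Prop :=
  forall P : A -> Prop, is_prime_ideal P ->
    exists h, [/\ prime_chain_to P h, ~ prime_chain_to P h.+1,
                  loc_gen P h & forall m, (m < h)%N -> ~ loc_gen P m].

Variable n : nat.
Variable y : 'I_n -> A.

Definition ksgn (I : {set 'I_n}) (i : 'I_n) : A :=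
  (-1) ^+ #|[set k in I | (k < i)%N]|.

Definition kvec := {ffun {set 'I_n} -> A}.

Definition ksingle (J : {set 'I_n}) (c : A) : kvec :=
  [ffun K => if K == J then c else 0].

Definition kbd (I : {set 'I_n}) : kvec :=
  \sum_(i in I) ksingle (I :\ i) (ksgn I i * y i).

Definition kd (f : kvec) : kvec :=
  \sum_(I : {set 'I_n}) [ffun K => f I * kbd I K].

Definition khom (l : nat) (f : kvec) : Prop :=
  forall I : {set 'I_n}, #|I| != l -> f I = 0.

Definition koszul_regular : Prop :=
  forall (l : nat) (f : kvec), (0 < l)%N -> khom l f -> kd f = 0 ->
    exists g, khom l.+1 g /\ kd g = f.

(* An element sum_i a_i Θ^i is represented by the polynomial sum_i a_i X^i
   (coefficients on the left); multiplication uses Θ^i b = b^(p^(e i)) Θ^i. *)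
Variables (p e : nat).

Definition skmul (f g : {poly A}) : {poly A} :=
  \poly_(k < size f + size g)
     \sum_(i < k.+1) f`_i * (g`_(k - i)) ^+ (p ^ (e * i)).

(* All FK_l together: basis element (I,false) is e_I (degree |I|),
   (J,true) is e_J ∧ u (degree |J|+1).  An element is its coefficient
   function with values in A[Θ;F^e]. *)
Definition fkvec := {ffun {set 'I_n} * bool -> {poly A}}.

Definition fsingle (z0 : {set 'I_n} * bool) (c : {poly A}) : fkvec :=
  [ffun z => if z == z0 then c else 0].

Definition fkdeg (z : {set 'I_n} * bool) : nat := (#|z.1| + z.2)%N.

Definition fkhom (l : nat) (f : fkvec) : Prop :=
  forall z, fkdeg z != l -> f z = 0.

Definition yJ (J : {set 'I_n}) : A := \prod_(j in J) y j ^+ (p ^ e - 1).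

Definition fkbd (z : {set 'I_n} * bool) : fkvec :=
  let I := z.1 in
  if ~~ z.2 then \sum_(i in I) fsingle (I :\ i, false) (ksgn I i * y i)%:P
  else fsingle (I, false) (((-1) ^+ #|I|)%:P * ('X - (yJ I)%:P))
       + \sum_(j in I) fsingle (I :\ j, true) (ksgn I j * y j ^+ (p ^ e))%:P.

Definition fkd (f : fkvec) : fkvec :=
  \sum_(z : {set 'I_n} * bool) [ffun w => skmul (f z) (fkbd z w)].

(* augmentation FK_0 = A[Θ;F^e] -> A/I_n, r ↦ r·1̄ ; Σ a_i Θ^i ↦ class of Σ a_i *)
Definition fkaug (f : fkvec) : A :=
  let q := f (set0, false) in \sum_(i < size q) q`_i.

End CommAlg.

(* Write an element of FK_l as sum_k Theta^k (a_k + b_k /\ u) with a_k, b_k in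
   the Koszul complex.  Since Theta^k y = y^(q k) Theta^k for q k = p^(e k), the
   differential acts coefficientwise:
     b_k |-> d_(y^(q (k+1))) b_k,
     a_k |-> d_(y^(q k)) a_k +- (b_(k-1) - y_J^((p^e-1) q k) b_k).
   So FK is glued from the Koszul complexes K(y^(q k)), and these are acyclic:
   Koszul regularity passes from y to y^m one entry at a time, because K(y) is
   the mapping cone of multiplication by y_j on the Koszul complex of the other
   entries, and multiplication by y_j^m inherits from y_j the bijectivity on its
   homology.  A cycle is then a boundary: first correct its b_k, then its a_k.
   In degree 0, d(e_0 /\ u) = Theta - 1, so evaluation at Theta = 1 identifies
   H_0 with A/I_n. *)

From HB Require Import structures.
From mathcomp Require Import all_boot all_order all_algebra.
From mathcomp Require Import ring zify.
Set Implicit Arguments. Unset Strict Implicit. Unset Printing Implicit Defensive.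
Import GRing.Theory.
Local Open Scope ring_scope.

(* The scalar action c *: f is coordinatewise multiplication; it is borrowed
   from the regular module A^o. *)
HB.instance Definition _ (A : comNzRingType) (n : nat) :=
  GRing.Lmodule.copy (kvec A n) {ffun {set 'I_n} -> A^o}.

Section KoszulComplex.
Variables (A : comNzRingType) (n : nat).
Implicit Types (z : 'I_n -> A) (f g : kvec A n) (I K : {set 'I_n}).

Lemma kaddE f g I : (f + g) I = f I + g I.
Proof. by rewrite ffunE. Qed.

Lemma kscaleE c f I : (c *: f) I = c * f I.
Proof. by rewrite ffunE. Qed.

Lemma ksgn_setU1 (x i : 'I_n) I : x \notin I ->
  ksgn A (x |: I) i = (if (x < i)%N then -1 else 1) * ksgn A I i.
Proof.
move=> xI; rewrite /ksgn.
have -> : [set k in x |: I | (k < i)%N] =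
  (if (x < i)%N then x |: [set k in I | (k < i)%N] else [set k in I | (k < i)%N]).
  apply/setP=> k; rewrite !inE; case: ifP => xi; rewrite ?inE;
  case: (eqVneq k x) => [->|] //=; rewrite ?xi ?(negbTE xI) //= ?andbF //.
case: ifP => _; last by rewrite mul1r.
by rewrite cardsU1 inE (negbTE xI) /= exprS.
Qed.

Lemma ksgn_setU1_id (i : 'I_n) I : ksgn A (i |: I) i = ksgn A I i.
Proof.
rewrite /ksgn; congr (_ ^+ _); apply: eq_card => k; rewrite !inE.
by case: (eqVneq k i) => [->|] /=; rewrite ?ltnn ?andbF // ?orbF ?andbT.
Qed.

Lemma mul_ksgn_ksgn I i : ksgn A I i * ksgn A I i = 1.
Proof. by rewrite /ksgn -exprD -signr_odd oddD addbb. Qed.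

Lemma ksgn_set1 (i : 'I_n) : ksgn A [set i] i = 1.
Proof.
rewrite -(setU0 [set i]) ksgn_setU1_id /ksgn.
by rewrite (_ : [set k in set0 | _] = set0) ?cards0 //; apply/setP=> k; rewrite !inE.
Qed.

Lemma kbdE z I K :
  kbd z I K = \sum_(i in I) (if K == I :\ i then ksgn A I i * z i else 0).
Proof. by rewrite /kbd sum_ffunE; apply: eq_bigr => i _; rewrite ffunE. Qed.

Lemma kdE z f K : kd z f K = \sum_I f I * kbd z I K.
Proof. by rewrite /kd sum_ffunE; apply: eq_bigr => I _; rewrite ffunE. Qed.

Lemma kdE_setU1 z f K :
  kd z f K = \sum_(i | i \notin K) f (i |: K) * (ksgn A (i |: K) i * z i).
Proof.
rewrite kdE; under eq_bigr do rewrite kbdE big_distrr /=.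
rewrite (exchange_big_dep predT) //= [LHS](bigID (fun i => i \notin K)) /=.
rewrite [X in _ + X]big1 ?addr0 => [|i]; last first.
  rewrite negbK => iK; apply: big1 => I iI; case: eqP => [KE|]; last by rewrite mulr0.
  by move: iK; rewrite KE setD11.
apply: eq_bigr => i iK; rewrite (bigD1 (i |: K)) ?setU11 //= setU1K // eqxx.
rewrite big1 ?addr0 // => I /andP[iI IiK]; case: eqP => [KE|]; last by rewrite mulr0.
by case/eqP: IiK; rewrite KE setD1K.
Qed.

Lemma kd_is_linear z : linear (kd z).
Proof.
move=> c f g; apply/ffunP=> K.
rewrite ffunE kscaleE !kdE mulr_sumr -big_split /=.
by apply: eq_bigr => I _; rewrite ffunE kscaleE mulrDl mulrA.
Qed.

HB.instance Definition _ z :=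
  GRing.isLinear.Build A (kvec A n) (kvec A n) *:%R (kd z) (kd_is_linear z).

Lemma eq_kd z (z' : 'I_n -> A) : z =1 z' -> kd z =1 kd z'.
Proof.
by move=> E f; apply/ffunP=> K; rewrite !kdE_setU1; apply: eq_bigr => i _; rewrite E.
Qed.

Lemma kd_khom z l f : khom l.+1 f -> khom l (kd z f).
Proof.
move=> hf K Kl; rewrite kdE_setU1 big1 // => i iK.
by rewrite hf ?mul0r // cardsU1 iK.
Qed.

Lemma kd_khom0 z f : khom 0 f -> kd z f = 0.
Proof.
move=> hf; apply/ffunP=> K; rewrite ffunE kdE_setU1 big1 // => i iK.
by rewrite hf ?mul0r // cardsU1 iK.
Qed.

Lemma kd_set0 z f : kd z f set0 = \sum_i f [set i] * z i.
Proof.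
rewrite kdE_setU1 (eq_bigl predT) => [|i]; last by rewrite inE.
by apply: eq_bigr => i _; rewrite setU0 ksgn_set1 mul1r.
Qed.

Lemma kbd_set1_set0 z i : kbd z [set i] set0 = z i.
Proof. by rewrite kbdE big_set1 setDv eqxx ksgn_set1 mul1r. Qed.

Lemma sumr_antisym (R : zmodType) m (F : 'I_m -> 'I_m -> R) :
  (forall i, F i i = 0) -> (forall i j, F i j + F j i = 0) -> \sum_i \sum_j F i j = 0.
Proof.
move=> F0 Fa; rewrite (eq_bigr (fun i : 'I_m =>
  \sum_(j : 'I_m | (i < j)%N) F i j + \sum_(j : 'I_m | ~~ (i < j)%N) F i j));
  last by move=> i _; rewrite [LHS](bigID (fun j : 'I_m => (i < j)%N)).
rewrite big_split /= (exchange_big_dep predT) //=.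
rewrite [X in _ + X](eq_bigr (fun i : 'I_m => \sum_(j : 'I_m | (j < i)%N) F i j)); last first.
  move=> i _; rewrite big_mkcond [RHS]big_mkcond /=; apply: eq_bigr => j _.
  by case: (ltngtP i j) => [|_|/val_inj ->] //=; rewrite F0.
rewrite -big_split /=; apply: big1 => i _; rewrite -big_split /=; apply: big1 => j _.
by rewrite addrC Fa.
Qed.

(* The terms for (i, j) and (j, i) cancel, since the two signs differ. *)
Lemma kd_kd z f : kd z (kd z f) = 0.
Proof.
apply/ffunP=> K; rewrite ffunE kdE_setU1.
pose F (i j : 'I_n) := if (i \notin K) && (j \notin K) && (i != j) then
   f (j |: (i |: K)) * (ksgn A (j |: (i |: K)) j * z j) * (ksgn A (i |: K) i * z i)
   else 0.
have F0 i : F i i = 0 by rewrite /F eqxx andbF.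
have Fa i j : F i j + F j i = 0.
  have [->|ij] := eqVneq i j; first by rewrite F0 addr0.
  rewrite /F ij (eq_sym j i) ij /=.
  case iK: (i \in K); rewrite ?andbF /= ?add0r ?addr0 //.
  case jK: (j \in K); rewrite ?andbF /= ?add0r ?addr0 //.
  rewrite setUCA !ksgn_setU1_id !ksgn_setU1 ?inE ?negb_or ?iK ?jK ?(eq_sym j i) ?ij //.
  case: (ltngtP i j) => [_|_|/val_inj eij]; rewrite ?ltnn; [ring | ring |].
  by rewrite eij eqxx in ij.
rewrite -[RHS](sumr_antisym F0 Fa) [RHS](bigID (fun i => i \notin K)) /=.
rewrite [X in _ = _ + X]big1 ?addr0 => [|i iK]; last first.
  by apply: big1 => j _; rewrite /F (negbTE iK).
apply: eq_bigr => i iK; rewrite kdE_setU1 mulr_suml.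
rewrite [RHS](bigID (fun j => j \notin i |: K)) /= [X in _ = _ + X]big1 ?addr0 => [|j].
  apply: eq_bigr => j; rewrite /F !inE negb_or iK /= => /andP[ji jK].
  by rewrite jK eq_sym ji.
by rewrite negbK /F !inE => /orP[/eqP->|->]; rewrite ?eqxx ?andbF ?andbT.
Qed.

Lemma eq_koszul_regular z (z' : 'I_n -> A) : z =1 z' -> koszul_regular z -> koszul_regular z'.
Proof.
move=> E H l f l0 hf df.
have [g [hg dg]] := H l f l0 hf (etrans (eq_kd E f) df).
by exists g; rewrite -(eq_kd E).
Qed.

End KoszulComplex.

Section KoszulCoordinateMul.
Variables (A : comNzRingType) (n : nat).
Implicit Types (z : 'I_n -> A) (c : {set 'I_n} -> A) (w : kvec A n).

Definition kmul c w : kvec A n := [ffun I => c I * w I].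

Lemma kmul_is_linear c : linear (kmul c).
Proof. by move=> a u v; apply/ffunP=> I; rewrite !(kaddE, kscaleE, ffunE); ring. Qed.

HB.instance Definition _ c :=
  GRing.isLinear.Build A (kvec A n) (kvec A n) *:%R (kmul c) (kmul_is_linear c).

Lemma kd_kmul z (z' : 'I_n -> A) c c' w :
  (forall (K : {set 'I_n}) i, i \notin K -> c (i |: K) * z i = c' K * z' i) ->
  kd z (kmul c w) = kmul c' (kd z' w).
Proof.
move=> E; apply/ffunP=> K; rewrite !ffunE !kdE_setU1 mulr_sumr.
apply: eq_bigr => i iK; rewrite ffunE.
transitivity (w (i |: K) * ksgn A (i |: K) i * (c (i |: K) * z i)); first by ring.
by rewrite E //; ring.
Qed.

Definition ksign (I : {set 'I_n}) : A := (-1) ^+ #|I|.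

Lemma kd_kmul_ksign z w : kd z (kmul ksign w) = - kmul ksign (kd z w).
Proof.
rewrite (@kd_kmul z z ksign (fun K => - ksign K)) => [|K i iK]; last first.
  by rewrite /ksign cardsU1 iK exprS mulN1r mulNr.
by apply/ffunP=> K; rewrite !ffunE mulNr.
Qed.

End KoszulCoordinateMul.

Arguments ksign {A n} I.

Section KoszulSplit.
Variables (A : comNzRingType) (n : nat) (j : 'I_n).
Implicit Types (z : 'I_n -> A) (f g u v : kvec A n) (I K : {set 'I_n}).

(* K(z) = K(z without j) (+) K(z without j) e_j as graded modules: [kpart_out f]
   and [kpart_in f] are the two components of f, and [kglue] reassembles them. *)
Definition avoids f := forall I, j \in I -> f I = 0.

Definition kpart_out f : kvec A n := [ffun I : {set 'I_n} => if j \in I then 0 else f I].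

Definition kpart_in f : kvec A n :=
  [ffun I : {set 'I_n} => if j \in I then 0 else ksgn A I j * f (j |: I)].

Definition kglue u v : kvec A n :=
  [ffun I : {set 'I_n} => if j \in I then ksgn A (I :\ j) j * v (I :\ j) else u I].

Lemma avoids_kpart_out f : avoids (kpart_out f).
Proof. by move=> I jI; rewrite ffunE jI. Qed.

Lemma avoids_kpart_in f : avoids (kpart_in f).
Proof. by move=> I jI; rewrite ffunE jI. Qed.

Lemma kpart_out0 : kpart_out 0 = 0.
Proof. by apply/ffunP=> I; rewrite !ffunE if_same. Qed.

Lemma kpart_in0 : kpart_in 0 = 0.
Proof. by apply/ffunP=> I; rewrite !ffunE mulr0 if_same. Qed.

Lemma kpart_out_glue u v : avoids u -> kpart_out (kglue u v) = u.
Proof.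
by move=> hu; apply/ffunP=> I; rewrite !ffunE; case: ifP => jI; rewrite ?jI // hu.
Qed.

Lemma kpart_in_glue u v : avoids v -> kpart_in (kglue u v) = v.
Proof.
move=> hv; apply/ffunP=> I; rewrite !ffunE; case: ifP => jI; first by rewrite hv.
by rewrite setU11 setU1K ?jI // mulrA mul_ksgn_ksgn mul1r.
Qed.

Lemma kpart_inj f g : kpart_out f = kpart_out g -> kpart_in f = kpart_in g -> f = g.
Proof.
move=> ho hi; apply/ffunP=> I; case jI: (j \in I); last first.
  by have := congr1 (fun h : kvec A n => h I) ho; rewrite !ffunE jI.
have := congr1 (fun h : kvec A n => ksgn A (I :\ j) j * h (I :\ j)) hi.
by rewrite !ffunE setD11 setD1K // !mulrA mul_ksgn_ksgn !mul1r.
Qed.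

Lemma avoids_kd z f : avoids f -> avoids (kd z f).
Proof.
move=> hf I jI; rewrite kdE_setU1 big1 // => i _.
by rewrite hf ?mul0r // !inE jI orbT.
Qed.

Lemma kd_avoids_eq z (z' : 'I_n -> A) f :
  avoids f -> (forall i, i != j -> z i = z' i) -> kd z f = kd z' f.
Proof.
move=> hf E; apply/ffunP=> K; rewrite !kdE_setU1; apply: eq_bigr => i iK.
have [->|ij] := eqVneq i j; first by rewrite hf ?mul0r // setU11.
by rewrite E.
Qed.

Lemma kpart_out_kd z f : kpart_out (kd z f) = kd z (kpart_out f) + z j *: kpart_in f.
Proof.
apply/ffunP=> K; rewrite ffunE [RHS]ffunE kscaleE !ffunE; case: ifP => jK.
  by rewrite (avoids_kd _ (avoids_kpart_out f)) // mulr0 addr0.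
rewrite !kdE_setU1 (bigD1 j) ?jK //= [X in _ = X + _](bigD1 j) ?jK //=.
rewrite ffunE setU11 mul0r add0r ksgn_setU1_id addrC; congr (_ + _); last by ring.
by apply: eq_bigr => i /andP[iK ij]; rewrite ffunE !inE eq_sym (negbTE ij) jK.
Qed.

Lemma kpart_in_kd z f : kpart_in (kd z f) = - kd z (kpart_in f).
Proof.
apply/ffunP=> K; rewrite !ffunE; case: ifP => jK.
  by rewrite (avoids_kd _ (avoids_kpart_in f)) // oppr0.
rewrite !kdE_setU1 [X in _ = - X](bigD1 j) ?jK //= ffunE setU11 mul0r add0r.
rewrite mulr_sumr -sumrN (eq_bigl (fun i => (i \notin K) && (i != j))); last first.
  by move=> i; rewrite !inE negb_or andbC.
apply: eq_bigr => i /andP[iK ij]; rewrite ffunE !inE eq_sym (negbTE ij) jK /=.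
rewrite setUCA !ksgn_setU1_id !ksgn_setU1 ?jK //; last by rewrite !inE negb_or jK eq_sym ij.
have -> : (j < i)%N = ~~ (i < j)%N.
  by case: (ltngtP i j) => // /val_inj eij; move: ij; rewrite eij eqxx.
by rewrite ltnn mul1r; case: (i < j)%N => /=; ring.
Qed.

Lemma khom_kpart_out l f : khom l f -> khom l (kpart_out f).
Proof. by move=> hf I Il; rewrite ffunE hf ?if_same. Qed.

Lemma khom_kpart_in l f : khom l.+1 f -> khom l (kpart_in f).
Proof.
move=> hf I Il; rewrite ffunE; case: ifP => // jI.
by rewrite hf ?mulr0 // cardsU1 jI.
Qed.

Lemma khom_kglue l u v : khom l.+1 u -> khom l v -> khom l.+1 (kglue u v).
Proof.
move=> hu hv I Il; rewrite ffunE; case: ifP => jI; last by rewrite hu.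
by rewrite hv ?mulr0 //; move: Il; rewrite (cardsD1 j I) jI.
Qed.

End KoszulSplit.

Section KoszulRegularExp.
Variables (A : comNzRingType) (n : nat) (j : 'I_n).
Implicit Types (z : 'I_n -> A) (c : A) (f u v w : kvec A n).

(* Graded pieces of the Koszul complex on the entries of z other than z j. *)
Definition khom_off l f := khom l f /\ avoids j f.

Lemma khom_offD l f g : khom_off l f -> khom_off l g -> khom_off l (f + g).
Proof.
move=> [hf af] [hg ag]; split=> I ?; rewrite ffunE; first by rewrite hf ?hg ?addr0.
by rewrite af ?ag ?addr0.
Qed.

Lemma khom_offN l f : khom_off l f -> khom_off l (- f).
Proof.
by move=> [hf af]; split=> I ?; rewrite ffunE; [rewrite hf | rewrite af]; rewrite ?oppr0.
Qed.

Lemma khom_offZ l c f : khom_off l f -> khom_off l (c *: f).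
Proof.
by move=> [hf af]; split=> I ?; rewrite kscaleE; [rewrite hf | rewrite af]; rewrite ?mulr0.
Qed.

Lemma khom_off0 l : khom_off l 0.
Proof. by split=> I _; rewrite ffunE. Qed.

(* Multiplication by c is onto, resp. one-to-one, on the positive-degree
   homology of that complex. *)
Definition hsurj z c := forall l u, (0 < l)%N -> khom_off l u -> kd z u = 0 ->
  exists v w, [/\ khom_off l v, kd z v = 0, khom_off l.+1 w & u = c *: v + kd z w].

Definition hinj z c := forall l v w, khom_off l v -> kd z v = 0 -> khom_off l.+1 w ->
  c *: v = kd z w -> exists w', khom_off l.+1 w' /\ v = kd z w'.

(* Exactness of the mapping cone of multiplication by c in positive degrees;
   with z j replaced by c, it is the Koszul regularity of z. *)
Definition cone_exact z c := forall l u v, khom_off l.+1 u -> khom_off l v ->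
  kd z u + c *: v = 0 -> kd z v = 0 ->
  exists a b, [/\ khom_off l.+2 a, khom_off l.+1 b, u = kd z a + c *: b & v = - kd z b].

Lemma cone_exact_hsurj z c : cone_exact z c -> hsurj z c.
Proof.
move=> H [//|l] u _ hu du.
have E0 : kd z u + c *: 0 = 0 by rewrite scaler0 addr0.
have [a [b [ha hb ua vb]]] := H l u 0 hu (khom_off0 _) E0 (raddf0 (kd z)).
exists b, a; split=> //; last by rewrite addrC.
by apply/eqP; rewrite -oppr_eq0 -vb.
Qed.

Lemma cone_exact_hinj z c : cone_exact z c -> hinj z c.
Proof.
move=> H l v w hv dv hw cv.
have E0 : kd z (- w) + c *: v = 0 by rewrite raddfN cv addNr.
have [a [b [_ hb _ vb]]] := H l (- w) v (khom_offN hw) hv E0 dv.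
by exists (- b); split; [exact: khom_offN | rewrite raddfN].
Qed.

Lemma hsurj_exp z c m : hsurj z c -> hsurj z (c ^+ m).
Proof.
move=> H; elim: m => [|m IH] l u l0 hu du.
  by exists u, 0; rewrite expr0 scale1r linear0 addr0; split=> //; exact: khom_off0.
have [v [w [hv dv hw ->]]] := IH l u l0 hu du.
have [v2 [w2 [hv2 dv2 hw2 ->]]] := H l v l0 hv dv.
exists v2, (c ^+ m *: w2 + w); split=> //; first by apply: khom_offD => //; exact: khom_offZ.
by rewrite scalerDr scalerA linearD linearZ exprSr addrA.
Qed.

Lemma hinj_exp z c m : hinj z c -> hinj z (c ^+ m).
Proof.
move=> H; elim: m => [|m IH] l v w hv dv hw E.
  by exists w; rewrite -E expr0 scale1r.
have [w2 [hw2 E2]] : exists w2, khom_off l.+1 w2 /\ c ^+ m *: v = kd z w2.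
  apply: (H l _ w) => //; first exact: khom_offZ.
    by rewrite linearZ /= dv scaler0.
  by rewrite scalerA -exprS.
exact: (IH l v w2).
Qed.

Lemma hsurj_hinj_cone_exact z c : hsurj z c -> hinj z c -> cone_exact z c.
Proof.
move=> HS HI l u v hu hv E dv.
have [w' [hw' vw']] : exists w', khom_off l.+1 w' /\ v = kd z w'.
  apply: (HI l v (- u)) => //; first exact: khom_offN.
  by rewrite raddfN; apply/eqP; rewrite -addr_eq0 addrC E.
have E0 : kd z (u + c *: w') = 0 by rewrite linearD linearZ /= -vw'.
have [v1 [a [hv1 dv1 ha E2]]] :=
  HS l.+1 (u + c *: w') erefl (khom_offD hu (khom_offZ _ hw')) E0.
exists a, (v1 - w'); split=> //.
- by apply: khom_offD => //; exact: khom_offN.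
- by rewrite scalerDr scalerN addrA (addrC (kd z a)) -E2 addrK.
- by rewrite raddfB /= dv1 sub0r opprK.
Qed.

Lemma koszul_regular_cone_exact z : koszul_regular z -> cone_exact z (z j).
Proof.
move=> H l u v [hu au] [hv av] E dv.
have hf : khom l.+1 (kglue j u v) by exact: khom_kglue.
have df : kd z (kglue j u v) = 0.
  apply: (kpart_inj (j := j)).
    by rewrite kpart_out_kd kpart_out_glue ?kpart_in_glue ?kpart_out0.
  by rewrite kpart_in_kd kpart_in_glue // dv oppr0 kpart_in0.
have [g [hg dg]] := H l.+1 _ erefl hf df.
exists (kpart_out j g), (kpart_in j g); split.
- by split; [exact: khom_kpart_out | exact: avoids_kpart_out].
- by split; [exact: khom_kpart_in | exact: avoids_kpart_in].
- by rewrite -kpart_out_kd dg kpart_out_glue.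
- by rewrite -kpart_in_kd dg kpart_in_glue // opprK.
Qed.

Lemma cone_exact_koszul_regular z (z' : 'I_n -> A) :
  (forall i, i != j -> z i = z' i) -> cone_exact z (z' j) -> koszul_regular z'.
Proof.
move=> E H [//|l] f _ hf df.
have kdE' u : avoids j u -> kd z u = kd z' u by move=> hu; exact: kd_avoids_eq hu E.
have E1 : kd z (kpart_out j f) + z' j *: kpart_in j f = 0.
  by rewrite (kdE' _ (avoids_kpart_out (j := j) f)) -kpart_out_kd df kpart_out0.
have E2 : kd z (kpart_in j f) = 0.
  rewrite (kdE' _ (avoids_kpart_in (j := j) f)).
  by apply/eqP; rewrite -oppr_eq0 -kpart_in_kd df kpart_in0.
have [a [b [[ha aa] [hb ab] ua vb]]] := H l (kpart_out j f) (kpart_in j f)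
  (conj (khom_kpart_out j hf) (avoids_kpart_out (j := j) f))
  (conj (khom_kpart_in j hf) (avoids_kpart_in (j := j) f)) E1 E2.
exists (kglue j a b); split; first exact: khom_kglue.
apply: (kpart_inj (j := j)).
  by rewrite kpart_out_kd kpart_out_glue ?kpart_in_glue // ua !kdE'.
by rewrite kpart_in_kd kpart_in_glue // vb kdE'.
Qed.

Lemma koszul_regular_exp1 z m : koszul_regular z ->
  koszul_regular (fun i => if i == j then z i ^+ m else z i).
Proof.
move=> H; apply: (@cone_exact_koszul_regular z) => [i /negbTE -> //|].
rewrite eqxx; have HC := koszul_regular_cone_exact H.
apply: hsurj_hinj_cone_exact.
  exact/hsurj_exp/cone_exact_hsurj.
exact/hinj_exp/cone_exact_hinj.
Qed.

End KoszulRegularExp.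

Lemma koszul_regular_exp (A : comNzRingType) n (y : 'I_n -> A) m :
  koszul_regular y -> koszul_regular (fun i => y i ^+ m).
Proof.
move=> H.
suff: forall t, koszul_regular (fun i : 'I_n => if (i < t)%N then y i ^+ m else y i).
  by move/(_ n); apply: eq_koszul_regular => i; rewrite ltn_ord.
elim=> [|t IH]; first by apply: eq_koszul_regular H => i.
have [tn|nt] := ltnP t n; last first.
  by apply: eq_koszul_regular IH => i; rewrite !(leq_trans (ltn_ord i)) // ltnW.
have := koszul_regular_exp1 (j := Ordinal tn) (m := m) IH; apply: eq_koszul_regular => i.
have [->|ne] := eqVneq i (Ordinal tn); first by rewrite /= ltnn ltnSn.
have ne' : (nat_of_ord i == t) = false by apply/negbTE; rewrite -(inj_eq val_inj) in ne.
by rewrite /= [in RHS]ltnS [in RHS]leq_eqVlt ne'.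
Qed.

Section IdealMembership.
Variables (A : comNzRingType) (n : nat).
Implicit Types (z : 'I_n -> A) (a b : A) (w : kvec A n).

Lemma in_gen0 z : in_gen z 0.
Proof. by exists (fun _ => 0); rewrite big1 // => i _; rewrite mul0r. Qed.

Lemma in_genD z a b : in_gen z a -> in_gen z b -> in_gen z (a + b).
Proof.
move=> [c1 ->] [c2 ->]; exists (fun i => c1 i + c2 i).
by rewrite -big_split; apply: eq_bigr => i _; rewrite mulrDl.
Qed.

Lemma in_genMl z r a : in_gen z a -> in_gen z (r * a).
Proof.
move=> [c ->]; exists (fun i => r * c i).
by rewrite mulr_sumr; apply: eq_bigr => i _; rewrite mulrA.
Qed.

Lemma in_genN z a : in_gen z a -> in_gen z (- a).
Proof. by rewrite -mulN1r; apply: in_genMl. Qed.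

Lemma in_gen_sum z (I : Type) (r : seq I) (P : pred I) (F : I -> A) :
  (forall i, P i -> in_gen z (F i)) -> in_gen z (\sum_(i <- r | P i) F i).
Proof. by move=> H; apply: (big_ind (in_gen z)) => //; [exact: in_gen0 | exact: in_genD]. Qed.

Lemma in_gen_exp z m m' a : (m' <= m)%N ->
  in_gen (fun i => z i ^+ m) a -> in_gen (fun i => z i ^+ m') a.
Proof.
move=> hm [c ->]; exists (fun i => c i * z i ^+ (m - m')).
by apply: eq_bigr => i _; rewrite -mulrA -exprD subnK.
Qed.

Lemma in_gen_id z i : in_gen z (z i).
Proof.
exists (fun j => (i == j)%:R); rewrite (bigD1 i) //= eqxx mul1r big1 ?addr0 // => j ij.
by rewrite eq_sym (negbTE ij) mul0r.
Qed.

Lemma in_gen_kbd_set0 z I : in_gen z (kbd z I set0).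
Proof.
rewrite kbdE; apply: in_gen_sum => i _.
by case: ifP => _; [apply/in_genMl/in_gen_id | exact: in_gen0].
Qed.

Lemma in_gen_kd_set0 z w : in_gen z (kd z w set0).
Proof. by rewrite kd_set0; exists (fun i => w [set i]). Qed.

Lemma in_gen_kd z v : khom 0 v -> in_gen z (v set0) -> exists w, khom 1 w /\ kd z w = v.
Proof.
move=> hv [c hc].
pose w : kvec A n := [ffun I => \sum_i (if I == [set i] then c i else 0)].
have hw : khom 1 w.
  move=> I hI; rewrite ffunE big1 // => i _.
  by case: eqP => // EI; move: hI; rewrite EI cards1.
exists w; split=> //; apply/ffunP => K; have [->|K0] := eqVneq K set0.
  rewrite kd_set0 hc; apply: eq_bigr => i _; rewrite ffunE (bigD1 i) //= eqxx.
  by rewrite big1 ?addr0 // => j /negbTE ji; rewrite (inj_eq set1_inj) eq_sym ji.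
by rewrite hv ?(kd_khom z hw) ?cards_eq0.
Qed.

End IdealMembership.

Lemma fin_choice (T : Type) (x0 : T) (P : nat -> T -> Prop) N :
  (forall k, (k < N)%N -> exists x, P k x) ->
  exists c : nat -> T, forall k, (k < N)%N -> P k (c k).
Proof.
elim: N => [|N IH] H; first by exists (fun _ => x0).
have [c hc] := IH (fun k hk => H k (ltnW hk)).
have [x hx] := H N (ltnSn N).
exists (fun k => if k == N then x else c k) => k; rewrite ltnS leq_eqVlt.
by case: eqP => [-> | _ /hc].
Qed.

Section IteratedFrobenius.
Variables (A : comNzRingType) (p : nat) (hp : p \in [pchar A]).
Implicit Types x : A.

Definition frobn of p \in [pchar A] := fun m x => x ^+ (p ^ m).

Lemma frobnE m x : frobn hp m x = x ^+ (p ^ m).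
Proof. by []. Qed.

Lemma expn_pchar_gt0 m : (0 < p ^ m)%N.
Proof. by rewrite expn_gt0 prime_gt0 ?(pcharf_prime hp). Qed.

Lemma frobn_is_nmod_morphism m : nmod_morphism (frobn hp m).
Proof.
have p_nat : [pchar A].-nat (p ^ m)%N by rewrite pnatX (pnatE _ (pcharf_prime hp)) hp.
split=> [|x y]; last exact: exprDn_pchar.
by rewrite frobnE expr0n eqn0Ngt expn_pchar_gt0.
Qed.

Lemma frobn_is_monoid_morphism m : monoid_morphism (frobn hp m).
Proof. by split=> [|x y]; rewrite frobnE ?expr1n ?exprMn. Qed.

HB.instance Definition _ m :=
  GRing.isNmodMorphism.Build A A (frobn hp m) (frobn_is_nmod_morphism m).
HB.instance Definition _ m :=
  GRing.isMonoidMorphism.Build A A (frobn hp m) (frobn_is_monoid_morphism m).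

Lemma expr_pchar0 m : (0 : A) ^+ (p ^ m) = 0.
Proof. exact: (rmorph0 (frobn hp m)). Qed.

Lemma expr_pcharN m x : (- x) ^+ (p ^ m) = - x ^+ (p ^ m).
Proof. exact: (rmorphN (frobn hp m)). Qed.

Lemma expr_pchar_sign m k : ((-1) ^+ k : A) ^+ (p ^ m) = (-1) ^+ k.
Proof. exact: (rmorph_sign (frobn hp m)). Qed.

Lemma expr_pchar_sum m (I : Type) (r : seq I) (P : pred I) (F : I -> A) :
  (\sum_(i <- r | P i) F i) ^+ (p ^ m) = \sum_(i <- r | P i) F i ^+ (p ^ m).
Proof. exact: (rmorph_sum (frobn hp m)). Qed.

End IteratedFrobenius.

Section SkewMultiplication.
Variables (A : comNzRingType) (p : nat) (hp : p \in [pchar A]) (e : nat).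
Implicit Types (f g : {poly A}) (c s : A).

Local Notation skmul := (skmul p e).

Lemma coef_skmul f g k :
  (skmul f g)`_k = \sum_(i < k.+1) f`_i * g`_(k - i) ^+ (p ^ (e * i)).
Proof.
rewrite coef_poly; case: ltnP => // hk; symmetry; apply: big1 => i _.
have [hi|hi] := ltnP i (size f); last by rewrite nth_default ?mul0r.
rewrite [g`_(k - i)]nth_default ?expr_pchar0 ?mulr0 //.
by move: (nat_of_ord i) (size f) (size g) hi hk => m a b; lia.
Qed.

Lemma size_skmul f g : (size (skmul f g) <= size f + size g)%N.
Proof. exact: size_poly. Qed.

Lemma skmulBl f1 f2 g : skmul (f1 - f2) g = skmul f1 g - skmul f2 g.
Proof.
apply/polyP => k; rewrite coefB !coef_skmul -sumrB.
by apply: eq_bigr => i _; rewrite coefB mulrBl.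
Qed.

Lemma skmul0l g : skmul 0 g = 0.
Proof. by rewrite -[0 in LHS](subrr 0) skmulBl subrr. Qed.

Lemma skmulCl c g : skmul c%:P g = c%:P * g.
Proof.
apply/polyP => k; rewrite coef_skmul coefCM big_ord_recl coefC eqxx muln0 expr1.
by rewrite subn0 big1 ?addr0 // => i _; rewrite coefC mul0r.
Qed.

Lemma coef_skmulC f c k : (skmul f c%:P)`_k = f`_k * c ^+ (p ^ (e * k)).
Proof.
rewrite coef_skmul big_ord_recr /= subnn coefC eqxx big1 ?add0r // => i _.
by rewrite coefC subn_eq0 leqNgt ltn_ord expr_pchar0 ?mulr0.
Qed.

Lemma skmul0r f : skmul f 0 = 0.
Proof. by apply/polyP => k; rewrite -polyC0 coef_skmulC expr_pchar0 ?mulr0 ?coef0. Qed.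

(* Theta * s = s * Theta when s is fixed by the Frobenius power. *)
Lemma coef_skmul_XsubC f s c k : s ^+ (p ^ e) = s ->
  (skmul f (s%:P * ('X - c%:P)))`_k =
  (if k is k'.+1 then f`_k' * s else 0) - f`_k * (s * c ^+ (p ^ (e * k))).
Proof.
move=> hs; have hsq m : s ^+ (p ^ (e * m)) = s.
  by elim: m => [|m IH]; rewrite ?muln0 ?expr1 // mulnS expnD exprM hs IH.
rewrite coef_skmul big_ord_recr /= subnn coefCM coefB coefX coefC eqxx /= sub0r.
rewrite mulrN expr_pcharN // exprMn hsq mulrN.
case: k => [|k]; first by rewrite big_ord0 add0r.
rewrite big_ord_recr /= subSnn coefCM coefB coefX coefC /= subr0 mulr1 hsq.
rewrite big1 ?add0r // => i _.
have h2 : (1 < k.+1 - i)%N by move: (nat_of_ord i) (ltn_ord i) => m; lia.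
rewrite coefCM coefB coefX coefC (gtn_eqF h2) (gtn_eqF (ltnW h2)) subr0 mulr0.
by rewrite expr_pchar0 ?mulr0.
Qed.

Lemma skmul_XsubC1 f : skmul f ('X - 1) = f * ('X - 1).
Proof.
have -> : 'X - 1 = 1%:P * ('X - 1%:P) :> {poly A} by rewrite polyC1 mul1r.
apply/polyP => k; rewrite coef_skmul_XsubC ?expr1n // polyC1 mul1r mulr1 mulrBr.
by rewrite mulr1 coefB coefMX mulr1; case: k => //= k; rewrite mulr1.
Qed.

End SkewMultiplication.

Section FrobeniusKoszulCoefficients.
Variables (A : comNzRingType) (p : nat) (hp : p \in [pchar A]) (e n : nat).
Variable y : 'I_n -> A.
Implicit Types (f g : fkvec A n) (x : {set 'I_n} * bool) (I K : {set 'I_n}) (b : bool).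

Local Notation q k := (p ^ (e * k))%N.
Local Notation yX m := (fun i => y i ^+ m).
Local Notation skmul := (skmul p e).
Local Notation fkd := (fkd y p e).
Local Notation fkbd := (fkbd y p e).

(* The coefficient of Theta^k in the e_I-part (b = false), resp. in the
   e_J /\ u-part (b = true), of f. *)
Definition fkcoef b f k : kvec A n := [ffun I => (f (I, b))`_k].

Definition fkcoefT_pred f k : kvec A n := if k is k'.+1 then fkcoef true f k' else 0.

Lemma fkcoef_inj f g : (forall b k, fkcoef b f k = fkcoef b g k) -> f = g.
Proof.
move=> E; apply/ffunP => -[I b]; apply/polyP => k.
by have := congr1 (fun x : kvec A n => x I) (E b k); rewrite !ffunE.
Qed.

Lemma fkcoef0 b k : fkcoef b 0 k = 0.
Proof. by apply/ffunP => I; rewrite !ffunE coef0. Qed.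

Lemma fkcoefB b f g k : fkcoef b (f - g) k = fkcoef b f k - fkcoef b g k.
Proof. by apply/ffunP => I; rewrite !ffunE coefB. Qed.

Lemma fkdE f x : fkd f x = \sum_z skmul (f z) (fkbd z x).
Proof. by rewrite /fkd sum_ffunE; apply: eq_bigr => z _; rewrite ffunE. Qed.

Lemma fkdB f g : fkd (f - g) = fkd f - fkd g.
Proof.
apply/ffunP => x; rewrite !ffunE !fkdE -sumrB.
by apply: eq_bigr => z _; rewrite !ffunE (skmulBl hp).
Qed.

Lemma fkd0 : fkd 0 = 0.
Proof. by rewrite -[0 in LHS](subrr 0) fkdB subrr. Qed.

Lemma fkdD f g : fkd (f + g) = fkd f + fkd g.
Proof. by rewrite -[g in LHS]opprK -[- g]sub0r !fkdB fkd0 sub0r opprK. Qed.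

Lemma fsingle_sumE (T : finType) (P : pred T) (F : T -> {set 'I_n} * bool)
    (c : T -> {poly A}) x :
  (\sum_(i | P i) fsingle (F i) (c i)) x = \sum_(i | P i) (if x == F i then c i else 0).
Proof. by rewrite sum_ffunE; apply: eq_bigr => i _; rewrite ffunE. Qed.

Lemma fkbd_base I x : fkbd (I, false) x = if x.2 then 0 else (kbd y I x.1)%:P.
Proof.
rewrite /fkbd /= fsingle_sumE kbdE rmorph_sum; case: x => K [] /=.
  by rewrite big1 // => i _; rewrite xpair_eqE andbF.
by apply: eq_bigr => i _; rewrite xpair_eqE andbT; case: ifP.
Qed.

Lemma fkbd_wedge I x : fkbd (I, true) x =
  if x.2 then (kbd (yX (p ^ e)) I x.1)%:P
  else if x.1 == I then (ksign I)%:P * ('X - (yJ y p e I)%:P) else 0.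
Proof.
rewrite /fkbd /= ffunE fsingle_sumE kbdE rmorph_sum; case: x => K [] /=.
  rewrite ffunE xpair_eqE andbF add0r; apply: eq_bigr => i _.
  by rewrite xpair_eqE andbT; case: ifP.
by rewrite ffunE xpair_eqE andbT big1 ?addr0 // => i _; rewrite xpair_eqE andbF.
Qed.

Lemma coef_fkd f x k : (fkd f x)`_k = \sum_I
  ((skmul (f (I, true)) (fkbd (I, true) x))`_k +
   (skmul (f (I, false)) (fkbd (I, false) x))`_k).
Proof.
pose G I b := (skmul (f (I, b)) (fkbd (I, b) x))`_k.
rewrite fkdE coef_sum (eq_bigr (fun z => G z.1 z.2)) => [|[] //].
by rewrite -(pair_bigA _ G); apply: eq_bigr => I _; rewrite big_bool.
Qed.

Lemma expr_kbd m (z : 'I_n -> A) I K :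
  kbd z I K ^+ (p ^ m) = kbd (fun i => z i ^+ (p ^ m)) I K.
Proof.
rewrite !kbdE (expr_pchar_sum hp); apply: eq_bigr => i _.
by case: ifP; rewrite ?(expr_pchar0 hp) // exprMn (expr_pchar_sign hp).
Qed.

(* Theta^k commutes with the Koszul differential after raising y to the power
   q k; the degree-raising term Theta e_J of d(e_J /\ u) contributes the
   coefficient of Theta^(k-1). *)
Lemma fkcoefF_fkd f k : fkcoef false (fkd f) k =
  kd (yX (q k)) (fkcoef false f k) +
  kmul ksign (fkcoefT_pred f k - kmul (fun I => yJ y p e I ^+ q k) (fkcoef true f k)).
Proof.
apply/ffunP => K; rewrite kaddE !ffunE coef_fkd big_split /= addrC kdE; congr (_ + _).
  by apply: eq_bigr => I _; rewrite fkbd_base /= (coef_skmulC hp) expr_kbd ffunE.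
rewrite (bigD1 K) //= big1 ?addr0 => [|I /negbTE IK]; last first.
  by rewrite fkbd_wedge /= eq_sym IK (skmul0r hp) coef0.
rewrite fkbd_wedge /= eqxx (coef_skmul_XsubC hp) ?(expr_pchar_sign hp) //.
case: k => [|k] /=; rewrite !ffunE ?kaddE ?ffunE //; ring.
Qed.

Lemma fkcoefT_fkd f k : fkcoef true (fkd f) k = kd (yX (q k.+1)) (fkcoef true f k).
Proof.
apply/ffunP => K; rewrite !ffunE coef_fkd big_split /= [X in _ + X]big1 ?addr0.
  rewrite kdE; apply: eq_bigr => I _.
  rewrite fkbd_wedge /= (coef_skmulC hp) expr_kbd ffunE; congr (_ * _).
  by rewrite !kbdE; apply: eq_bigr => i _; rewrite -exprM -expnD mulnS.
by move=> I _; rewrite fkbd_base /= (skmul0r hp) coef0.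
Qed.

End FrobeniusKoszulCoefficients.

Section FrobeniusKoszulComplex.
Variables (A : comNzRingType) (p : nat) (hp : p \in [pchar A]) (e n : nat).
Variable y : 'I_n -> A.
Implicit Types (f g : fkvec A n) (I K : {set 'I_n}) (b : bool) (w : kvec A n).
Implicit Types (x z : {set 'I_n} * bool) (c : {poly A}).

Local Notation q k := (p ^ (e * k))%N.
Local Notation yX m := (fun i => y i ^+ m).
Local Notation fkd := (fkd y p e).

Lemma kd_kmul_yJ k w :
  kd (yX (q k)) (kmul (fun I => yJ y p e I ^+ q k) w) =
  kmul (fun I => yJ y p e I ^+ q k) (kd (yX (q k.+1)) w).
Proof.
apply: kd_kmul => K i iK; rewrite /yJ big_setU1 //= exprMn -mulrA -mulrCA.
congr (_ * _); rewrite -exprM -exprD; congr (_ ^+ _).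
rewrite mulnS expnD; have := expn_pchar_gt0 hp e.
by move: (p ^ e)%N (p ^ (e * k))%N => a b ha; nia.
Qed.

Lemma fkcoefT_pred_fkd f k :
  fkcoefT_pred (fkd f) k = kd (yX (q k)) (fkcoefT_pred f k).
Proof. by case: k => [|k] /=; rewrite ?raddf0 // (fkcoefT_fkd hp). Qed.

Lemma fkd_fkd f : fkd (fkd f) = 0.
Proof.
apply: fkcoef_inj => -[] k; rewrite fkcoef0; first by rewrite !(fkcoefT_fkd hp) kd_kd.
rewrite (fkcoefF_fkd hp) fkcoefT_pred_fkd !(fkcoefT_fkd hp) (fkcoefF_fkd hp).
by rewrite linearD /= kd_kd add0r kd_kmul_ksign raddfB /= kd_kmul_yJ addNr.
Qed.

Lemma fkhom_coef L f b k I : fkhom L f -> (#|I| + b)%N != L -> fkcoef b f k I = 0.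
Proof. by move=> hf hI; rewrite ffunE hf ?coef0. Qed.

Lemma fkhom_of_coef L f :
  (forall b k I, (#|I| + b)%N != L -> fkcoef b f k I = 0) -> fkhom L f.
Proof.
move=> H [I b] hz; apply/polyP => k; rewrite coef0.
by have := H b k I hz; rewrite ffunE.
Qed.

Lemma khom_fkcoefF L f k : fkhom L f -> khom L (fkcoef false f k).
Proof. by move=> hf I hI; apply: fkhom_coef hf _; rewrite addn0. Qed.

Lemma khom_fkcoefT L f k : fkhom L.+1 f -> khom L (fkcoef true f k).
Proof. by move=> hf I hI; apply: fkhom_coef hf _; rewrite addn1. Qed.

Lemma fkhomB L f g : fkhom L f -> fkhom L g -> fkhom L (f - g).
Proof. by move=> hf hg z hz; rewrite !ffunE hf ?hg ?subr0. Qed.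

Lemma fkhomD L f g : fkhom L f -> fkhom L g -> fkhom L (f + g).
Proof. by move=> hf hg z hz; rewrite ffunE hf ?hg ?addr0. Qed.

Lemma fkd_fkhom L f : fkhom L.+1 f -> fkhom L (fkd f).
Proof.
move=> hf; apply: fkhom_of_coef => -[] k I; rewrite ?addn1 ?addn0 => hI.
  rewrite (fkcoefT_fkd hp); case: L hf hI => [|L] hf hI.
    by rewrite (kd_khom0 _ (khom_fkcoefT k hf)) ffunE.
  by rewrite (kd_khom _ (khom_fkcoefT k hf)).
have hT k' : (f (I, true))`_k' = 0 by rewrite hf ?coef0 // /fkdeg addn1.
rewrite (fkcoefF_fkd hp) kaddE (kd_khom _ (khom_fkcoefF k hf)) // add0r !ffunE.
by case: k => [|k] /=; rewrite ?ffunE !hT mulr0 subrr mulr0.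
Qed.

Lemma fkcoef_eq0_large f : exists N, forall b k, (N <= k)%N -> fkcoef b f k = 0.
Proof.
exists (\max_z size (f z)) => b k hk; apply/ffunP => I.
by rewrite !ffunE nth_default // (leq_trans _ hk) // (leq_bigmax (I, b)).
Qed.

Definition fkvec_of N (c : bool -> nat -> kvec A n) : fkvec A n :=
  [ffun x => \poly_(k < N) c x.2 k x.1].

Lemma fkcoef_of b N (c : bool -> nat -> kvec A n) k :
  fkcoef b (fkvec_of N c) k = if (k < N)%N then c b k else 0.
Proof. by apply/ffunP => I; rewrite !ffunE coef_poly; case: ifP; rewrite ?ffunE. Qed.

Lemma fkhom_fkvec_of L N (c : bool -> nat -> kvec A n) :
  (forall b k I, (k < N)%N -> (#|I| + b)%N != L -> c b k I = 0) -> fkhom L (fkvec_of N c).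
Proof.
move=> H; apply: fkhom_of_coef => b k I hI; rewrite fkcoef_of.
by case: ifP => hk; rewrite ?H ?ffunE.
Qed.

Lemma fkhom_fsingle L z c : fkdeg z = L -> fkhom L (fsingle z c).
Proof. by move=> <- x hx; rewrite ffunE; case: eqP => // ex; rewrite ex eqxx in hx. Qed.

Lemma fkhom_sum L (I : Type) (r : seq I) (P : pred I) (F : I -> fkvec A n) :
  (forall i, P i -> fkhom L (F i)) -> fkhom L (\sum_(i <- r | P i) F i).
Proof.
move=> H; apply: (big_ind (fkhom L)) => [x _|f g|]; first by rewrite ffunE.
  exact: fkhomD.
exact: H.
Qed.

Lemma fkdeg_eq0 x : (fkdeg x == 0%N) = (x == (set0, false)).
Proof.
by case: x => I []; rewrite /fkdeg xpair_eqE /= ?addn1 ?andbF ?addn0 ?andbT ?cards_eq0.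
Qed.

Lemma fkhom0_eq f g : fkhom 0 f -> fkhom 0 g -> f (set0, false) = g (set0, false) -> f = g.
Proof.
move=> hf hg E; apply/ffunP => x; have [-> //|nx] := eqVneq x (set0, false).
have hx : fkdeg x != 0%N by rewrite fkdeg_eq0.
by rewrite hf ?hg.
Qed.

Lemma fkd_sum (I : Type) (r : seq I) (P : pred I) (F : I -> fkvec A n) :
  fkd (\sum_(i <- r | P i) F i) = \sum_(i <- r | P i) fkd (F i).
Proof. by apply: big_morph; [exact: fkdD | exact: fkd0]. Qed.

(* In degree 1 the e_J /\ u-coefficients are scalars, and the cycle equations
   give c_k = c_(k+1) - (an element of (y^(q (k+1)))) for their values c_k;
   since c_k vanishes for large k, descending induction applies. *)
Lemma fkcoefT_set0_in_gen f : fkhom 1 f -> fkd f = 0 ->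
  forall k, in_gen (yX (q k.+1)) (fkcoef true f k set0).
Proof.
move=> hf df; have [N hN] := fkcoef_eq0_large f.
suff H d k : (N <= k + d)%N -> in_gen (yX (q k.+1)) (fkcoef true f k set0).
  by move=> k; apply: (H N); rewrite leq_addl.
elim: d k => [|d IH] k hk; first by rewrite addn0 in hk; rewrite hN // ffunE; exact: in_gen0.
have E := congr1 (fun v : kvec A n => v set0) (congr1 (fkcoef false ^~ k.+1) df).
rewrite /= fkcoef0 (fkcoefF_fkd hp) kaddE !ffunE /ksign cards0 /yJ big_set0 in E.
rewrite expr1n !mul1r /= in E.
have -> : fkcoef true f k set0 =
    fkcoef true f k.+1 set0 - kd (yX (q k.+1)) (fkcoef false f k.+1) set0.
  by rewrite !ffunE; apply/eqP; rewrite -subr_eq0 -[X in _ == X]E; apply/eqP; ring.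
apply: in_genD; last exact/in_genN/in_gen_kd_set0.
apply: (in_gen_exp (m := q k.+2)); last by apply: IH; rewrite addSnnS.
by rewrite leq_exp2l ?leq_mul2l ?leqnSn ?orbT ?prime_gt1 ?(pcharf_prime hp).
Qed.

Section Exactness.
Hypothesis HK : koszul_regular y.

Lemma fkcoefT_boundary l f : fkhom l.+1 f -> fkd f = 0 ->
  forall k, exists w, khom l.+1 w /\ kd (yX (q k.+1)) w = fkcoef true f k.
Proof.
move=> hf df k; have cyc : kd (yX (q k.+1)) (fkcoef true f k) = 0.
  by rewrite -(fkcoefT_fkd hp) df fkcoef0.
case: l hf => [|l] hf.
  apply: in_gen_kd; [exact: khom_fkcoefT | exact: fkcoefT_set0_in_gen].
exact: (koszul_regular_exp (m := q k.+1) HK) (ltn0Sn _) (khom_fkcoefT k hf) cyc.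
Qed.

Lemma fk_exact_wedge l f : fkhom l.+1 f -> fkd f = 0 ->
  exists g, fkhom l.+2 g /\ forall k, fkcoef true (f - fkd g) k = 0.
Proof.
move=> hf df; have [N hN] := fkcoef_eq0_large f.
have [be hbe] := fin_choice 0
  (P := fun k w => khom l.+1 w /\ kd (yX (q k.+1)) w = fkcoef true f k)
  (N := N) (fun k _ => fkcoefT_boundary hf df k).
exists (fkvec_of N (fun b => if b then be else fun _ => 0)); split.
  apply: fkhom_fkvec_of => -[] k I hk hI; last by rewrite ffunE.
  by have [hb _] := hbe k hk; apply: hb; rewrite -eqSS -addn1.
move=> k; rewrite fkcoefB (fkcoefT_fkd hp) fkcoef_of.
case: ifP => hk; first by have [_ ->] := hbe k hk; rewrite subrr.
by rewrite raddf0 hN ?subrr // leqNgt hk.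
Qed.

Lemma fk_exact_base l f : fkhom l.+1 f -> fkd f = 0 ->
  (forall k, fkcoef true f k = 0) -> exists g, fkhom l.+2 g /\ fkd g = f.
Proof.
move=> hf df hT; have [N hN] := fkcoef_eq0_large f.
have hpred g : (forall k, fkcoef true g k = 0) -> forall k, fkcoefT_pred g k = 0.
  by move=> H [|k] //=.
have cyc k : kd (yX (q k)) (fkcoef false f k) = 0.
  have := congr1 (fkcoef false ^~ k) df.
  by rewrite /= (fkcoefF_fkd hp) hpred // hT raddf0 subr0 raddf0 addr0 fkcoef0.
have [al hal] := fin_choice 0
  (P := fun k w => khom l.+2 w /\ kd (yX (q k)) w = fkcoef false f k) (N := N)
  (fun k _ => koszul_regular_exp (m := q k) HK (ltn0Sn _) (khom_fkcoefF k hf) (cyc k)).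
pose g := fkvec_of N (fun b => if b then fun _ => 0 else al).
have gT k : fkcoef true g k = 0 by rewrite fkcoef_of if_same.
exists g; split.
  apply: fkhom_fkvec_of => -[] k I hk hI; first by rewrite ffunE.
  by have [ha _] := hal k hk; apply: ha; rewrite -(addn0 #|I|).
apply: fkcoef_inj => -[] k; first by rewrite (fkcoefT_fkd hp) gT raddf0 hT.
rewrite (fkcoefF_fkd hp) gT hpred // raddf0 subr0 raddf0 addr0 fkcoef_of.
case: ifP => hk; first by have [_ ->] := hal k hk.
by rewrite raddf0 hN // leqNgt hk.
Qed.

Theorem fk_exact l f : (1 <= l)%N -> fkhom l f -> fkd f = 0 ->
  exists g, fkhom l.+1 g /\ fkd g = f.
Proof.
case: l => [//|l] _ hf df.
have [g1 [hg1 hT]] := fk_exact_wedge hf df.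
have hh : fkhom l.+1 (f - fkd g1) by apply: fkhomB => //; exact: fkd_fkhom.
have dh : fkd (f - fkd g1) = 0 by rewrite (fkdB hp) fkd_fkd df subrr.
have [g2 [hg2 dg2]] := fk_exact_base hh dh hT.
by exists (g1 + g2); split; [exact: fkhomD | rewrite (fkdD hp) dg2 addrC subrK].
Qed.

End Exactness.

Lemma fkaugE f : fkaug f = (f (set0, false)).[1].
Proof. by rewrite /fkaug horner_coef; apply: eq_bigr => i _; rewrite expr1n mulr1. Qed.

Lemma fkd_fsingle z c : fkd (fsingle z c) = [ffun x => skmul p e c (fkbd y p e z x)].
Proof.
apply/ffunP => x; rewrite fkdE ffunE (bigD1 z) //= ffunE eqxx big1 ?addr0 // => z' nz.
by rewrite ffunE (negbTE nz) (skmul0l hp).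
Qed.

Lemma fkbd_set0_wedge x : fkbd y p e (set0, true) x = if x == (set0, false) then 'X - 1 else 0.
Proof.
rewrite fkbd_wedge; case: x => K [] /=; last first.
  by rewrite xpair_eqE andbT /ksign cards0 /yJ big_set0 polyC1 mul1r.
by rewrite kbdE big_set0 xpair_eqE andbF.
Qed.

Lemma in_gen_horner1_skmulC (r : {poly A}) a : in_gen y a -> in_gen y (skmul p e r a%:P).[1].
Proof.
move=> ha; rewrite (horner_coef_wide _ (size_skmul p e r a%:P)).
apply: in_gen_sum => k _; rewrite (coef_skmulC hp) expr1n mulr1; apply: in_genMl.
by rewrite -(prednK (expn_pchar_gt0 hp _)) exprSr; apply: in_genMl.
Qed.

(* The augmentation kills all boundaries: d(e_I) has coefficients in I_n and
   d(e_0 /\ u) = Theta - 1 vanishes at Theta = 1. *)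
Lemma fkaug_fkd_in_gen g : in_gen y (fkaug (fkd g)).
Proof.
rewrite fkaugE fkdE horner_sum; apply: in_gen_sum => -[I []] _.
  rewrite fkbd_wedge /=; case: eqP => [<-|_]; last first.
    by rewrite (skmul0r hp) horner0; exact: in_gen0.
  rewrite /ksign cards0 /yJ big_set0 polyC1 mul1r (skmul_XsubC1 hp) hornerM hornerXsubC.
  by rewrite subrr mulr0; exact: in_gen0.
by rewrite fkbd_base; apply/in_gen_horner1_skmulC/in_gen_kbd_set0.
Qed.

(* If f = q e_0 with q(1) = sum_i c_i y_i, then q = q(1) + r (Theta - 1) and
   f is the boundary of sum_i c_i e_i + r e_0 /\ u. *)
Lemma in_gen_fkaug_boundary f : fkhom 0 f -> in_gen y (fkaug f) ->
  exists g, fkhom 1 g /\ fkd g = f.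
Proof.
move=> hf [c hc]; set s := fkaug f in hc.
have [r hr] : exists r, f (set0, false) - s%:P = r * ('X - 1%:P).
  by apply/factor_theorem; rewrite /root hornerD hornerN hornerC -fkaugE subrr.
pose g := \sum_i fsingle ([set i], false) (c i)%:P + fsingle (set0, true) r.
have hg : fkhom 1 g.
  apply: fkhomD; last by apply: fkhom_fsingle; rewrite /fkdeg cards0.
  by apply: fkhom_sum => i _; apply: fkhom_fsingle; rewrite /fkdeg cards1.
exists g; split=> //; apply: fkhom0_eq (fkd_fkhom hg) hf _.
rewrite (fkdD hp) fkd_sum ffunE sum_ffunE fkd_fsingle ffunE fkbd_set0_wedge eqxx.
rewrite (skmul_XsubC1 hp) -polyC1 -hr.
under eq_bigr do rewrite fkd_fsingle ffunE fkbd_base /= kbd_set1_set0 (skmulCl hp) -polyCM.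
by rewrite -rmorph_sum -hc addrC subrK.
Qed.

End FrobeniusKoszulComplex.

Theorem corollary3 (A : comNzRingType) (p : nat) (hp : p \in [pchar A])
    (HN : noetherian A) (HR : regular_ring A)
    (e : nat) (he : (1 <= e)%N) (n : nat) (y : 'I_n -> A)
    (HK : koszul_regular y) :
  (forall f : fkvec A n, fkd y p e (fkd y p e f) = 0) /\
  (forall (l : nat) (f : fkvec A n), (1 <= l)%N -> fkhom l f ->
     fkd y p e f = 0 -> exists g, fkhom l.+1 g /\ fkd y p e g = f) /\
  (forall a : A, exists f : fkvec A n, fkhom 0 f /\ fkaug f = a) /\
  (forall f : fkvec A n, fkhom 0 f ->
     (in_gen y (fkaug f) <-> exists g, fkhom 1 g /\ fkd y p e g = f)).
Proof.
split; first exact: fkd_fkd.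
split; first by move=> l f; exact: fk_exact.
split.
  move=> a; exists (fsingle (set0, false) a%:P); split.
    by apply: fkhom_fsingle; rewrite /fkdeg cards0.
  by rewrite fkaugE ffunE eqxx hornerC.
move=> f hf; split; first exact: in_gen_fkaug_boundary.
by move=> [g [_ <-]]; exact: fkaug_fkd_in_gen.
Qed.
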